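(* Let $a,b,c,p\in\mathbb{C}$ with $-c\notin\mathbb{N}\cup\{0\}$. Define $(u_n)$ and $(v_n)$ by $u_0=1$, $u_1=\frac{ab}{c}+ip$, $u_2=\frac{iabp}{c}+\frac{a(a+1)b(b+1)}{2c(c+1)}-\frac{p^2}{2}$, $v_0=1$, $v_1=\frac{ab}{c}-ip$, $v_2=-\frac{iabp}{c}+\frac{a(a+1)b(b+1)}{2c(c+1)}-\frac{p^2}{2}$, and for all integers $n\ge2$, \[ u_{n+1}=\frac{(a+n)(b+n)+ip(c+2n)}{(n+1)(c+n)}u_n+\frac{p\left(p-i(a+b+2n-1)\right)}{(n+1)(c+n)}u_{n-1}-\frac{p^2}{(n+1)(c+n)}u_{n-2}, \] \[ v_{n+1}=\frac{(a+n)(b+n)-ip(c+2n)}{(n+1)(c+n)}v_n+\frac{p\left(p+i(a+b+2n-1)\right)}{(n+1)(c+n)}v_{n-1}-\frac{p^2}{(n+1)(c+n)}v_{n-2}. \] Then \[ \cos(pz)F(a,b;c;z)=\sum_{n=0}^\infty\frac{u_n+v_n}{2}z^n,\qquad |z|<1. \]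
   Context: Here $i$ is the imaginary unit. For $a\in\mathbb{C}$, $(a)_n=a(a+1)\cdots(a+n-1)$ denotes the Pochhammer symbol, with $(a)_0=1$. For $a,b,c\in\mathbb{C}$ with $-c\notin\mathbb{N}\cup\{0\}$, the Gaussian hypergeometric function is $F(a,b;c;z)=\sum_{n=0}^\infty \frac{(a)_n(b)_n}{(c)_n\,n!}z^n$, $|z|<1$. *)

From Stdlib Require Import Reals.
From Coquelicot Require Import Coquelicot.
Open Scope C_scope.

Definition Cexp (w : C) : C :=
  (exp (Re w) * cos (Im w), exp (Re w) * sin (Im w))%R.
Definition Ccos (w : C) : C := (Cexp (Ci * w) + Cexp (- (Ci * w))) / 2.

Fixpoint poch (a : C) (n : nat) : C :=
  match n with O => 1 | S k => poch a k * (a + RtoC (INR k)) end.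

Definition CSeries (f : nat -> C) : C :=
  (Series (fun n => Re (f n)), Series (fun n => Im (f n))).

Definition hyp_term (a b c z : C) (n : nat) : C :=
  poch a n * poch b n / (poch c n * RtoC (INR (Factorial.fact n))) * Cpow z n.

Definition hypF (a b c z : C) : C := CSeries (hyp_term a b c z).

(* u_n and v_n are the Taylor coefficients of e^{ipz} F(z) and e^{-ipz} F(z).  Indeed
   G = e^{wz} F satisfies G' = w G + e^{wz} F'; substituting this into the hypergeometric
   equation z (1 - z) F'' + (c - (a + b + 1) z) F' - a b F = 0 yields a linear equation for G
   whose coefficient recurrence is the three-term recurrence of the statement with w = ip
   (resp. w = -ip), and the first three coefficients agree as well.  The exponential and the
   hypergeometric series converge absolutely for |z| < 1 (the latter by the ratio test), so
   the Cauchy product sums to e^{+-ipz} F(z), and averaging gives cos(pz) F(z). *)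

From Stdlib Require Import Reals Lra Lia.
From Coquelicot Require Import Coquelicot.

Lemma eq_of_three_term_rec {T : Type} (step : nat -> T -> T -> T -> T) (x y : nat -> T) :
  x 0%nat = y 0%nat -> x 1%nat = y 1%nat -> x 2%nat = y 2%nat ->
  (forall n, (2 <= n)%nat -> x (S n) = step n (x n) (x (n - 1)%nat) (x (n - 2)%nat)) ->
  (forall n, (2 <= n)%nat -> y (S n) = step n (y n) (y (n - 1)%nat) (y (n - 2)%nat)) ->
  forall n, x n = y n.
Proof.
  intros H0 H1 H2 Hx Hy.
  assert (Htriple : forall m, x m = y m /\ x (S m) = y (S m) /\ x (S (S m)) = y (S (S m))).
  { induction m as [|m (IH0 & IH1 & IH2)]; [auto|].
    repeat split; auto.
    rewrite (Hx (S (S m))), (Hy (S (S m))) by lia.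
    replace (S (S m) - 1)%nat with (S m) by lia. replace (S (S m) - 2)%nat with m by lia.
    now rewrite IH0, IH1, IH2. }
  intros n. apply Htriple.
Qed.

Lemma ex_series_Rabs_le (a b : nat -> R) :
  (forall n, Rabs (a n) <= b n) -> ex_series b -> ex_series (fun n => Rabs (a n)).
Proof.
  intros Hab. apply (ex_series_le (V := R_CompleteNormedModule)). intros n.
  change (Rabs (Rabs (a n)) <= b n)%R. now rewrite Rabs_Rabsolu.
Qed.

Lemma ex_series_ratio (t : nat -> R) (N : nat) (q : R) :
  (forall n, 0 <= t n) -> 0 <= q < 1 ->
  (forall n, (N <= n)%nat -> t (S n) <= q * t n) -> ex_series t.
Proof.
  intros Ht Hq Hratio. apply (ex_series_incr_n t N).
  assert (Hgeom : forall k, t (N + k)%nat <= t N * q ^ k).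
  { induction k as [|k IH].
    - rewrite Nat.add_0_r. simpl. lra.
    - rewrite Nat.add_succ_r. simpl.
      apply Rle_trans with (q * t (N + k)%nat); [apply Hratio; lia|].
      rewrite <- Rmult_assoc, (Rmult_comm (t N)), Rmult_assoc.
      apply Rmult_le_compat_l; [lra | exact IH]. }
  apply (ex_series_le (V := R_CompleteNormedModule) _ (fun k => t N * q ^ k)).
  - intros k. change (Rabs (t (N + k)%nat) <= t N * q ^ k).
    rewrite Rabs_pos_eq by apply Ht. apply Hgeom.
  - exists (t N * / (1 - q)).
    apply (is_series_scal_l (V := R_NormedModule)), is_series_geom.
    rewrite Rabs_pos_eq; lra.
Qed.

(* With rho = 2 / (1 + r) > 1 and q = rho^2 r < 1, once K + x <= rho (x - K). *)
Lemma quadratic_ratio_eventually_lt1 (K r : R) : 0 <= K -> 0 <= r < 1 ->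
  exists q X, 0 <= q < 1 /\
    forall x, X <= x -> K < x /\ (K + x) * (K + x) * r <= q * ((x + 1) * (x - K)).
Proof.
  intros HK Hr. set (rho := 2 / (1 + r)).
  exists (rho * rho * r), (K * (3 + r) / (1 - r) + K + 1).
  assert (Hrho : rho * (1 + r) = 2) by (unfold rho; field; lra).
  assert (Hrho0 : 0 <= rho) by (unfold rho; apply Rlt_le, Rdiv_lt_0_compat; lra).
  split.
  - split; [apply Rmult_le_pos; [nra | lra]|].
    assert (Hq : rho * rho * r * ((1 + r) * (1 + r)) = 4 * r).
    { transitivity ((rho * (1 + r)) * (rho * (1 + r)) * r); [ring|]. rewrite Hrho. ring. }
    assert (0 < (1 - r) * (1 - r)) by (apply Rmult_lt_0_compat; lra). nra.
  - intros x Hx.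
    assert (HX0 : 0 <= K * (3 + r) / (1 - r))
      by (apply Rmult_le_pos; [nra | apply Rlt_le, Rinv_0_lt_compat; lra]).
    assert (HKx : K * (3 + r) <= x * (1 - r)).
    { assert (HX : K * (3 + r) / (1 - r) <= x) by lra.
      apply Rmult_le_compat_r with (r := 1 - r) in HX; [|lra].
      unfold Rdiv in HX. rewrite Rmult_assoc, Rinv_l in HX by lra. lra. }
    assert (Hlin : K + x <= rho * (x - K)).
    { apply Rmult_le_reg_r with (1 + r); [lra|].
      replace (rho * (x - K) * (1 + r)) with (2 * (x - K)) by (rewrite <- Hrho; ring).
      lra. }
    split; [lra|].
    assert (Hsq : (K + x) * (K + x) <= rho * rho * ((x - K) * (x - K))) by nra.
    assert (HxK : (x - K) * (x - K) <= (x + 1) * (x - K)) by nra.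
    apply Rle_trans with (rho * rho * ((x - K) * (x - K)) * r); [nra|].
    assert (0 <= rho * rho * r) by (apply Rmult_le_pos; nra). nra.
Qed.

Lemma im_le_Cmod (z : C) : Rabs (Im z) <= Cmod z.
Proof.
  replace (Cmod z) with (Cmod (Im z, Re z)) by (unfold Cmod; simpl; now rewrite Rplus_comm).
  apply (re_le_Cmod (Im z, Re z)).
Qed.

Lemma Cmod_INR n : Cmod (RtoC (INR n)) = INR n.
Proof. rewrite Cmod_R. apply Rabs_pos_eq, pos_INR. Qed.

Lemma Cmod_plus_INR_le (u : C) n : Cmod (u + RtoC (INR n)) <= Cmod u + INR n.
Proof. rewrite <- (Cmod_INR n) at 2. apply Cmod_triangle. Qed.

Lemma Cmod_plus_INR_ge (u : C) n : INR n - Cmod u <= Cmod (u + RtoC (INR n)).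
Proof.
  pose proof (Cmod_triangle (u + RtoC (INR n)) (- u)) as H.
  replace (u + RtoC (INR n) + - u)%C with (RtoC (INR n)) in H by ring.
  rewrite Cmod_INR, Cmod_opp in H. lra.
Qed.

Open Scope C_scope.

Lemma RtoC_neq_0 (x : R) : x <> 0%R -> RtoC x <> 0.
Proof. intros Hx H. apply Hx. now injection H. Qed.

Lemma RtoC_INR_fact_neq_0 k : RtoC (INR (Factorial.fact k)) <> 0.
Proof. apply RtoC_neq_0, INR_fact_neq_0. Qed.

Lemma RtoC_INR_S_neq_0 k : RtoC (INR (S k)) <> 0.
Proof. apply RtoC_neq_0, not_0_INR. lia. Qed.

Lemma RtoC_INR_S k : RtoC (INR (S k)) = RtoC (INR k) + 1.
Proof. now rewrite S_INR, RtoC_plus. Qed.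

Lemma Cmult_eq_reg_l (a x y : C) : a * x = a * y -> a <> 0 -> x = y.
Proof.
  intros H Ha. replace x with (/ a * (a * x)) by (field; exact Ha).
  rewrite H. field. exact Ha.
Qed.

Lemma Cminus_diag_uniq (x y : C) : x - y = 0 -> x = y.
Proof. intros H. replace x with (x - y + y) by ring. rewrite H. ring. Qed.

Lemma Ci_sqr : Ci * Ci = - 1.
Proof. apply injective_projections; simpl; ring. Qed.

Lemma Csqr_via_Ci (q : C) : q * q = - ((Ci * q) * (Ci * q)).
Proof. transitivity (- (Ci * Ci) * (q * q)); [rewrite Ci_sqr|]; ring. Qed.

Lemma Cmult_sub_via_Ci (q X : C) : q * (q - Ci * X) = - (Ci * q) * (Ci * q + X).
Proof. transitivity (- (Ci * Ci) * (q * q) - Ci * q * X); [rewrite Ci_sqr|]; ring. Qed.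

(** * Finite sums and Cauchy products *)

(* A sequence y stands for the power series sum_k y_k z^k: [conv] is the product of two such
   series, [coef_deriv] the derivative and [coef_mulz] multiplication by z.  [csum f n] is
   f 0 + ... + f n. *)
Fixpoint csum (f : nat -> C) (n : nat) : C :=
  match n with O => f O | S m => csum f m + f (S m) end.

Definition conv (x y : nat -> C) (n : nat) : C :=
  csum (fun k => x k * y (n - k)%nat) n.

Definition coef_deriv (y : nat -> C) (k : nat) : C := RtoC (INR (S k)) * y (S k).

Definition coef_mulz (y : nat -> C) (k : nat) : C :=
  match k with O => 0 | S m => y m end.

Lemma csum_ext (f g : nat -> C) n :
  (forall k, (k <= n)%nat -> f k = g k) -> csum f n = csum g n.
Proof.
  induction n as [|n IH]; intros Hfg; simpl.
  - apply Hfg; lia.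
  - rewrite IH, Hfg; auto.
Qed.

Lemma csum_Sl (f : nat -> C) n : csum f (S n) = f O + csum (fun k => f (S k)) n.
Proof.
  induction n as [|n IH]; [reflexivity|].
  change (csum f (S (S n))) with (csum f (S n) + f (S (S n))).
  rewrite IH; simpl; ring.
Qed.

Lemma csum_plus (f g : nat -> C) n : csum (fun k => f k + g k) n = csum f n + csum g n.
Proof. induction n as [|n IH]; simpl; [|rewrite IH]; ring. Qed.

Lemma csum_minus (f g : nat -> C) n : csum (fun k => f k - g k) n = csum f n - csum g n.
Proof. induction n as [|n IH]; simpl; [|rewrite IH]; ring. Qed.

Lemma csum_scal (a : C) (f : nat -> C) n : csum (fun k => a * f k) n = a * csum f n.
Proof. induction n as [|n IH]; simpl; [|rewrite IH]; ring. Qed.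

Lemma Re_csum (f : nat -> C) n : Re (csum f n) = sum_f_R0 (fun k => Re (f k)) n.
Proof. induction n as [|n IH]; simpl; [|rewrite <- IH]; reflexivity. Qed.

Lemma Im_csum (f : nat -> C) n : Im (csum f n) = sum_f_R0 (fun k => Im (f k)) n.
Proof. induction n as [|n IH]; simpl; [|rewrite <- IH]; reflexivity. Qed.

Lemma conv_scal_l (a : C) (x y : nat -> C) n : conv (fun k => a * x k) y n = a * conv x y n.
Proof. unfold conv. rewrite <- csum_scal. apply csum_ext. intros; ring. Qed.

Lemma conv_zero_r (x y : nat -> C) n : (forall k, y k = 0) -> conv x y n = 0.
Proof.
  intros Hy. unfold conv. rewrite <- (Cmult_0_l (csum x n)), <- csum_scal.
  apply csum_ext. intros k _. rewrite Hy. ring.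
Qed.

Lemma conv_coef_mulz (x y : nat -> C) n : conv x (coef_mulz y) (S n) = conv x y n.
Proof.
  unfold conv. cbn [csum]. rewrite Nat.sub_diag, Cmult_0_r, Cplus_0_r.
  apply csum_ext. intros k Hk. now replace (S n - k)%nat with (S (n - k)) by lia.
Qed.

Lemma conv_coef_deriv (x y : nat -> C) n :
  RtoC (INR (S n)) * conv x y (S n) = conv (coef_deriv x) y n + conv x (coef_deriv y) n.
Proof.
  unfold conv.
  transitivity (csum (fun k => RtoC (INR k) * (x k * y (S n - k)%nat)) (S n)
              + csum (fun k => RtoC (INR (S n - k)) * (x k * y (S n - k)%nat)) (S n)).
  { rewrite <- csum_plus, <- csum_scal. apply csum_ext. intros k Hk.
    replace (INR (S n)) with (INR k + INR (S n - k))%R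
      by (rewrite <- plus_INR; f_equal; lia).
    rewrite RtoC_plus; ring. }
  f_equal.
  - rewrite csum_Sl. simpl INR at 1. rewrite Cmult_0_l, Cplus_0_l.
    apply csum_ext. intros k Hk. unfold coef_deriv.
    replace (S n - S k)%nat with (n - k)%nat by lia. ring.
  - cbn [csum]. rewrite Nat.sub_diag. simpl INR at 2. rewrite Cmult_0_l, Cplus_0_r.
    apply csum_ext. intros k Hk. unfold coef_deriv.
    replace (S n - k)%nat with (S (n - k)) by lia. ring.
Qed.

(** * Complex series *)

(* Componentwise, because Coquelicot's Cauchy product theorem [is_series_mult] is only
   stated over R. *)
Definition is_Cseries (f : nat -> C) (l : C) : Prop :=
  is_series (fun n => Re (f n)) (Re l) /\ is_series (fun n => Im (f n)) (Im l).

Lemma Re_sum_n (f : nat -> C) n : Re (sum_n f n) = sum_n (fun k => Re (f k)) n.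
Proof. induction n as [|n IH]; rewrite ?sum_O, ?sum_Sn, <- ?IH; reflexivity. Qed.

Lemma Im_sum_n (f : nat -> C) n : Im (sum_n f n) = sum_n (fun k => Im (f k)) n.
Proof. induction n as [|n IH]; rewrite ?sum_O, ?sum_Sn, <- ?IH; reflexivity. Qed.

Lemma is_Cseries_is_series f l : is_Cseries f l -> is_series f l.
Proof.
  intros [HRe HIm]. apply filterlim_locally. intros eps.
  generalize (filter_and _ _ (proj1 (filterlim_locally _ _) HRe eps)
                             (proj1 (filterlim_locally _ _) HIm eps)).
  apply filter_imp. intros n Hn.
  change (ball (Re l) eps (Re (sum_n f n)) /\ ball (Im l) eps (Im (sum_n f n))).
  now rewrite Re_sum_n, Im_sum_n.
Qed.

Lemma is_Cseries_ext f g l : (forall n, f n = g n) -> is_Cseries f l -> is_Cseries g l.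
Proof.
  intros Hfg [HRe HIm].
  split.
  - exact (is_series_ext _ _ _ (fun n => f_equal Re (Hfg n)) HRe).
  - exact (is_series_ext _ _ _ (fun n => f_equal Im (Hfg n)) HIm).
Qed.

Lemma is_Cseries_plus f g lf lg :
  is_Cseries f lf -> is_Cseries g lg -> is_Cseries (fun n => f n + g n) (lf + lg).
Proof. intros [A B] [C D]. split; now apply (is_series_plus (V := R_NormedModule)). Qed.

Lemma is_Cseries_scal (k : C) f l : is_Cseries f l -> is_Cseries (fun n => k * f n) (k * l).
Proof.
  intros [HRe HIm]. split.
  - exact (is_series_minus (V := R_NormedModule) _ _ _ _
             (is_series_scal_l (V := R_NormedModule) (Re k) _ _ HRe)
             (is_series_scal_l (V := R_NormedModule) (Im k) _ _ HIm)).
  - exact (is_series_plus (V := R_NormedModule) _ _ _ _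
             (is_series_scal_l (V := R_NormedModule) (Re k) _ _ HIm)
             (is_series_scal_l (V := R_NormedModule) (Im k) _ _ HRe)).
Qed.

Lemma is_Cseries_conv f g lf lg :
  is_Cseries f lf -> is_Cseries g lg ->
  ex_series (fun n => Cmod (f n)) -> ex_series (fun n => Cmod (g n)) ->
  is_Cseries (conv f g) (lf * lg).
Proof.
  intros [fRe fIm] [gRe gIm] Hf Hg.
  pose proof (ex_series_Rabs_le _ _ (fun n => re_le_Cmod (f n)) Hf) as aRe.
  pose proof (ex_series_Rabs_le _ _ (fun n => im_le_Cmod (f n)) Hf) as aIm.
  pose proof (ex_series_Rabs_le _ _ (fun n => re_le_Cmod (g n)) Hg) as bRe.
  pose proof (ex_series_Rabs_le _ _ (fun n => im_le_Cmod (g n)) Hg) as bIm.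
  split.
  - eapply is_series_ext; [ | apply (is_series_minus (V := R_NormedModule));
      [ exact (is_series_mult _ _ _ _ fRe gRe aRe bRe)
      | exact (is_series_mult _ _ _ _ fIm gIm aIm bIm) ] ].
    intros n. change (plus ?x (opp ?y)) with (x - y)%R.
    unfold conv. rewrite Re_csum, <- minus_sum. now apply sum_eq.
  - eapply is_series_ext; [ | apply (is_series_plus (V := R_NormedModule));
      [ exact (is_series_mult _ _ _ _ fRe gIm aRe bIm)
      | exact (is_series_mult _ _ _ _ fIm gRe aIm bRe) ] ].
    intros n. change (plus ?x ?y) with (x + y)%R.
    unfold conv. rewrite Im_csum, <- plus_sum. now apply sum_eq.
Qed.

Lemma is_Cseries_CSeries f :
  ex_series (fun n => Cmod (f n)) -> is_Cseries f (CSeries f).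
Proof.
  intros Hf. split; apply Series_correct, ex_series_Rabs.
  - exact (ex_series_Rabs_le _ _ (fun n => re_le_Cmod (f n)) Hf).
  - exact (ex_series_Rabs_le _ _ (fun n => im_le_Cmod (f n)) Hf).
Qed.

(** * The exponential series *)

Definition exp_coef (w : C) (k : nat) : C := Cpow w k / RtoC (INR (Factorial.fact k)).

Lemma exp_coef_0 w : exp_coef w 0 = 1.
Proof. unfold exp_coef. simpl. field. Qed.

Lemma exp_coef_1 w : exp_coef w 1 = w.
Proof. unfold exp_coef. simpl. field. Qed.

Lemma exp_coef_2 w : exp_coef w 2 = w * w / 2.
Proof. unfold exp_coef. simpl. rewrite RtoC_plus. field. Qed.

Lemma exp_coef_mul_pow w z k : exp_coef (w * z) k = exp_coef w k * Cpow z k.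
Proof. unfold exp_coef. rewrite Cpow_mult_l. field. apply RtoC_INR_fact_neq_0. Qed.

Lemma coef_deriv_exp_coef w k : coef_deriv (exp_coef w) k = w * exp_coef w k.
Proof.
  unfold coef_deriv, exp_coef. rewrite fact_simpl, mult_INR, RtoC_mult. simpl Cpow.
  field. split; [apply RtoC_INR_fact_neq_0 | apply RtoC_INR_S_neq_0].
Qed.

Lemma conv_exp_coef w1 w2 n : conv (exp_coef w1) (exp_coef w2) n = exp_coef (w1 + w2) n.
Proof.
  induction n as [|n IH].
  - unfold conv. simpl. rewrite !exp_coef_0. ring.
  - apply (Cmult_eq_reg_l (RtoC (INR (S n)))); [|apply RtoC_INR_S_neq_0].
    change (RtoC (INR (S n)) * exp_coef (w1 + w2) (S n))
      with (coef_deriv (exp_coef (w1 + w2)) n).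
    rewrite conv_coef_deriv, coef_deriv_exp_coef, <- IH.
    unfold conv. rewrite <- csum_plus, <- csum_scal.
    apply csum_ext. intros k _. rewrite !coef_deriv_exp_coef. ring.
Qed.

Lemma conv_exp_coef_coef_deriv w y k :
  conv (exp_coef w) (coef_deriv y) k
  = RtoC (INR (S k)) * conv (exp_coef w) y (S k) - w * conv (exp_coef w) y k.
Proof.
  rewrite conv_coef_deriv, <- conv_scal_l.
  unfold conv. rewrite <- csum_plus, <- csum_minus. apply csum_ext. intros j _.
  rewrite coef_deriv_exp_coef. ring.
Qed.

Lemma ex_series_Cmod_exp_coef w : ex_series (fun k => Cmod (exp_coef w k)).
Proof.
  exists (exp (Cmod w)).
  apply (is_series_ext (fun k => / INR (Factorial.fact k) * Cmod w ^ k)%R).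
  - intros k. unfold exp_coef.
    rewrite Cmod_div by apply RtoC_INR_fact_neq_0.
    rewrite Cmod_pow, Cmod_R, Rabs_pos_eq by apply pos_INR.
    apply Rmult_comm.
  - apply is_pseries_R, is_exp_Reals.
Qed.

Lemma is_series_R0 : is_series (fun _ : nat => 0%R) 0%R.
Proof.
  apply (is_series_ext (fun k => scal (pow_n 0%R k) 0%R)); [intros; apply Rmult_0_r|].
  exact (is_pseries_0 (fun _ => 0%R)).
Qed.

Lemma is_pseries_R0 x : is_pseries (fun _ : nat => 0%R) x 0%R.
Proof.
  apply is_pseries_R, (is_series_ext (fun _ => 0%R)).
  - intros. symmetry. apply Rmult_0_l.
  - exact is_series_R0.
Qed.

Lemma is_Cseries_exp_coef_real x : is_Cseries (exp_coef (RtoC x)) (RtoC (exp x)).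
Proof.
  assert (Hcoef : forall k, exp_coef (RtoC x) k = RtoC (/ INR (Factorial.fact k) * x ^ k)).
  { intros k. unfold exp_coef. rewrite <- RtoC_pow, <- RtoC_div by apply INR_fact_neq_0.
    f_equal. unfold Rdiv. ring. }
  split.
  - apply (is_series_ext (fun k => / INR (Factorial.fact k) * x ^ k)%R).
    + intros k. now rewrite Hcoef.
    + apply is_pseries_R, is_exp_Reals.
  - apply (is_series_ext (fun _ => 0%R)); [intros k; now rewrite Hcoef | exact is_series_R0].
Qed.

Lemma Cpow_Ci_even m : Cpow Ci (2 * m) = RtoC ((-1) ^ m).
Proof.
  rewrite Cpow_mult_r, RtoC_pow. f_equal. apply injective_projections; simpl; ring.
Qed.

Lemma exp_coef_Ci_even m : exp_coef Ci (2 * m) = RtoC (cos_n m).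
Proof.
  unfold exp_coef, cos_n. now rewrite Cpow_Ci_even, RtoC_div by apply INR_fact_neq_0.
Qed.

Lemma exp_coef_Ci_odd m : exp_coef Ci (2 * m + 1) = RtoC (sin_n m) * Ci.
Proof.
  unfold exp_coef, sin_n. rewrite Cpow_add_r, Cpow_Ci_even, RtoC_div by apply INR_fact_neq_0.
  simpl Cpow. field. apply RtoC_INR_fact_neq_0.
Qed.

Lemma is_pseries_Re_exp_coef_Ci y : is_pseries (fun k => Re (exp_coef Ci k)) y (cos y).
Proof.
  replace (cos y) with (cos y + y * 0)%R by ring.
  apply is_pseries_odd_even.
  - apply (is_pseries_ext cos_n); [intros m; now rewrite exp_coef_Ci_even|].
    unfold cos. destruct (exist_cos (Rsqr y)) as [l Hl].
    apply is_pseries_R, is_series_Reals.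
    replace (y ^ 2)%R with (Rsqr y) by (unfold Rsqr; ring). exact Hl.
  - apply (is_pseries_ext (fun _ => 0%R)); [|apply is_pseries_R0].
    intros m. rewrite exp_coef_Ci_odd. simpl. ring.
Qed.

Lemma is_pseries_Im_exp_coef_Ci y : is_pseries (fun k => Im (exp_coef Ci k)) y (sin y).
Proof.
  unfold sin. destruct (exist_sin (Rsqr y)) as [l Hl].
  replace (y * l)%R with (0 + y * l)%R by ring.
  apply is_pseries_odd_even.
  - apply (is_pseries_ext (fun _ => 0%R)); [|apply is_pseries_R0].
    intros m. now rewrite exp_coef_Ci_even.
  - apply (is_pseries_ext sin_n).
    + intros m. rewrite exp_coef_Ci_odd. simpl. ring.
    + apply is_pseries_R, is_series_Reals.
      replace (y ^ 2)%R with (Rsqr y) by (unfold Rsqr; ring). exact Hl.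
Qed.

Lemma is_Cseries_exp_coef_imag y : is_Cseries (exp_coef (Ci * RtoC y)) (cos y, sin y).
Proof.
  split.
  - apply (is_series_ext (fun k => Re (exp_coef Ci k) * y ^ k)%R).
    + intros k. rewrite exp_coef_mul_pow, <- RtoC_pow. simpl. ring.
    + apply is_pseries_R, is_pseries_Re_exp_coef_Ci.
  - apply (is_series_ext (fun k => Im (exp_coef Ci k) * y ^ k)%R).
    + intros k. rewrite exp_coef_mul_pow, <- RtoC_pow. simpl. ring.
    + apply is_pseries_R, is_pseries_Im_exp_coef_Ci.
Qed.

Lemma is_Cseries_exp_coef w : is_Cseries (exp_coef w) (Cexp w).
Proof.
  destruct w as [x y].
  replace (Cexp (x, y)) with (RtoC (exp x) * (cos y, sin y))
    by (apply injective_projections; simpl; ring).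
  apply (is_Cseries_ext (conv (exp_coef (RtoC x)) (exp_coef (Ci * RtoC y)))).
  - intros n. rewrite conv_exp_coef. f_equal.
    apply injective_projections; simpl; ring.
  - apply is_Cseries_conv; auto using is_Cseries_exp_coef_real, is_Cseries_exp_coef_imag,
      ex_series_Cmod_exp_coef.
Qed.

(** * The hypergeometric series *)

Section Hypergeometric.

Variables a b c : C.
Hypothesis hc : forall n : nat, c <> - RtoC (INR n).

Definition hyp_coef (n : nat) : C :=
  poch a n * poch b n / (poch c n * RtoC (INR (Factorial.fact n))).

(* z (1 - z) y'' + (c - (a + b + 1) z) y' - a b y, on coefficients. *)
Definition hyp_op (y : nat -> C) (k : nat) : C :=
  coef_mulz (coef_deriv (coef_deriv y)) k - coef_mulz (coef_mulz (coef_deriv (coef_deriv y))) k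
  + c * coef_deriv y k - (a + b + 1) * coef_mulz (coef_deriv y) k - a * b * y k.

Lemma c_plus_INR_neq_0 n : c + RtoC (INR n) <> 0.
Proof.
  intros H. apply (hc n). replace c with (c + RtoC (INR n) - RtoC (INR n)) by ring.
  rewrite H. ring.
Qed.

Lemma poch_c_neq_0 n : poch c n <> 0.
Proof.
  induction n as [|n IH]; simpl.
  - apply RtoC_neq_0, R1_neq_R0.
  - apply Cmult_neq_0; [exact IH | apply c_plus_INR_neq_0].
Qed.

Lemma hyp_coef_S n :
  RtoC (INR (S n)) * (c + RtoC (INR n)) * hyp_coef (S n)
  = (a + RtoC (INR n)) * (b + RtoC (INR n)) * hyp_coef n.
Proof.
  unfold hyp_coef. simpl poch. rewrite fact_simpl, mult_INR, RtoC_mult.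
  field.
  repeat split; auto using poch_c_neq_0, c_plus_INR_neq_0, RtoC_INR_S_neq_0, RtoC_INR_fact_neq_0.
Qed.

Lemma hyp_coef_0 : hyp_coef 0 = 1.
Proof. unfold hyp_coef. simpl. field. Qed.

Lemma hyp_coef_1 : hyp_coef 1 = a * b / c.
Proof.
  pose proof (c_plus_INR_neq_0 0) as Hc0. simpl INR in Hc0. rewrite Cplus_0_r in Hc0.
  unfold hyp_coef. simpl. field. exact Hc0.
Qed.

Lemma hyp_coef_2 : hyp_coef 2 = a * (a + 1) * b * (b + 1) / (2 * c * (c + 1)).
Proof.
  pose proof (c_plus_INR_neq_0 0) as Hc0. pose proof (c_plus_INR_neq_0 1) as Hc1.
  simpl INR in Hc0, Hc1. rewrite Cplus_0_r in Hc0.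
  unfold hyp_coef. simpl. rewrite !RtoC_plus.
  field; auto.
Qed.

Lemma hyp_op_eq y k :
  hyp_op y k
  = RtoC (INR (S k)) * (c + RtoC (INR k)) * y (S k)
    - (a + RtoC (INR k)) * (b + RtoC (INR k)) * y k.
Proof.
  unfold hyp_op, coef_mulz, coef_deriv.
  destruct k as [|[|k]]; rewrite ?S_INR, ?RtoC_plus; simpl INR; ring.
Qed.

Lemma conv_hyp_op x y n :
  conv x (hyp_op y) n
  = conv x (coef_mulz (coef_deriv (coef_deriv y))) n
    - conv x (coef_mulz (coef_mulz (coef_deriv (coef_deriv y)))) n
    + c * conv x (coef_deriv y) n - (a + b + 1) * conv x (coef_mulz (coef_deriv y)) n
    - a * b * conv x y n.
Proof.
  unfold conv. rewrite <- !csum_scal, <- csum_minus, <- csum_plus, <- !csum_minus.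
  apply csum_ext. intros k _. unfold hyp_op. ring.
Qed.

Lemma hyp_term_S z n :
  RtoC (INR (S n)) * (c + RtoC (INR n)) * hyp_term a b c z (S n)
  = (a + RtoC (INR n)) * (b + RtoC (INR n)) * z * hyp_term a b c z n.
Proof.
  change (hyp_term a b c z ?k) with (hyp_coef k * Cpow z k).
  rewrite Cpow_S.
  transitivity (RtoC (INR (S n)) * (c + RtoC (INR n)) * hyp_coef (S n) * (z * Cpow z n));
    [ring|].
  rewrite hyp_coef_S. ring.
Qed.

Lemma hyp_term_ratio_le z n :
  let K := (Cmod a + Cmod b + Cmod c)%R in
  let x := INR n in
  (K < x)%R ->
  ((x + 1) * (x - K) * Cmod (hyp_term a b c z (S n))
   <= (K + x) * (K + x) * Cmod z * Cmod (hyp_term a b c z n))%R.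
Proof.
  intros K x HKx.
  pose proof (f_equal Cmod (hyp_term_S z n)) as Hmod.
  rewrite !Cmod_mult, Cmod_INR, S_INR in Hmod. fold x in Hmod.
  pose proof (Cmod_plus_INR_le a n) as Ha. pose proof (Cmod_plus_INR_le b n) as Hb.
  pose proof (Cmod_plus_INR_ge c n) as Hc. fold x in Ha, Hb, Hc.
  pose proof (Cmod_ge_0 a). pose proof (Cmod_ge_0 b). pose proof (Cmod_ge_0 c).
  apply Rle_trans with ((x + 1) * Cmod (c + RtoC x) * Cmod (hyp_term a b c z (S n)))%R.
  { apply Rmult_le_compat_r; [apply Cmod_ge_0|]. apply Rmult_le_compat_l; unfold K in *; lra. }
  rewrite Hmod.
  apply Rmult_le_compat_r; [apply Cmod_ge_0|]. apply Rmult_le_compat_r; [apply Cmod_ge_0|].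
  apply Rmult_le_compat; try apply Cmod_ge_0; unfold K in *; lra.
Qed.

Lemma ex_series_Cmod_hyp_term z :
  (Cmod z < 1)%R -> ex_series (fun n => Cmod (hyp_term a b c z n)).
Proof.
  intros Hz. set (K := (Cmod a + Cmod b + Cmod c)%R).
  assert (HK : (0 <= K)%R)
    by (pose proof (Cmod_ge_0 a); pose proof (Cmod_ge_0 b); pose proof (Cmod_ge_0 c);
        unfold K; lra).
  destruct (quadratic_ratio_eventually_lt1 K (Cmod z) HK (conj (Cmod_ge_0 z) Hz))
    as (q & X & Hq & HX).
  destruct (INR_unbounded X) as [N HN].
  apply (ex_series_ratio _ N q); [intros; apply Cmod_ge_0 | exact Hq |].
  intros n Hn.
  destruct (HX (INR n)) as [HKn Hbound].
  { apply Rle_trans with (INR N); [lra | now apply le_INR]. }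
  pose proof (hyp_term_ratio_le z n HKn) as Hratio.
  pose proof (Cmod_ge_0 (hyp_term a b c z n)) as Ht.
  apply Rmult_le_reg_l with ((INR n + 1) * (INR n - K))%R; [apply Rmult_lt_0_compat; lra|].
  eapply Rle_trans; [exact Hratio|].
  apply Rle_trans with (q * ((INR n + 1) * (INR n - K)) * Cmod (hyp_term a b c z n))%R.
  - apply Rmult_le_compat_r; [exact Ht | exact Hbound].
  - right. ring.
Qed.

Lemma is_Cseries_hypF z : (Cmod z < 1)%R -> is_Cseries (hyp_term a b c z) (hypF a b c z).
Proof. intros Hz. now apply is_Cseries_CSeries, ex_series_Cmod_hyp_term. Qed.

(* Eliminating F from G = e^{wz} F, G' = w G + e^{wz} F' and the hypergeometric equation. *)
Lemma exp_hyp_coef_rec w m :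
  let N := RtoC (INR (S (S m))) in
  let G := conv (exp_coef w) hyp_coef in
  (N + 1) * (c + N) * G (S (S (S m)))
  = ((a + N) * (b + N) + w * (c + 2 * N)) * G (S (S m))
    - w * (w + a + b + 2 * N - 1) * G (S m) + w * w * G m.
Proof.
  intros N G. unfold N, G.
  assert (H0 : conv (exp_coef w) (hyp_op hyp_coef) (S (S m)) = 0).
  { apply conv_zero_r. intros k. rewrite hyp_op_eq, hyp_coef_S. ring. }
  rewrite conv_hyp_op, !conv_coef_mulz, !conv_exp_coef_coef_deriv in H0.
  apply Cminus_diag_uniq. rewrite <- H0. rewrite !RtoC_INR_S. ring.
Qed.

(* The recurrence of the statement for u, with p renamed q; [hun] is literally this after
   unfolding. *)
Definition exp_hyp_step (q : C) (n : nat) (y0 y1 y2 : C) : C :=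
  let N := RtoC (INR n) in
  ((a + N) * (b + N) + Ci * q * (c + 2 * N)) / ((N + 1) * (c + N)) * y0
  + q * (q - Ci * (a + b + 2 * N - 1)) / ((N + 1) * (c + N)) * y1
  - q * q / ((N + 1) * (c + N)) * y2.

Lemma exp_hyp_coef_step q n : (2 <= n)%nat ->
  let G := conv (exp_coef (Ci * q)) hyp_coef in
  G (S n) = exp_hyp_step q n (G n) (G (n - 1)%nat) (G (n - 2)%nat).
Proof.
  intros Hn G. destruct n as [|[|m]]; try lia.
  replace (S (S m) - 1)%nat with (S m) by lia. replace (S (S m) - 2)%nat with m by lia.
  pose proof (exp_hyp_coef_rec (Ci * q) m) as Hrec. cbv zeta in Hrec. fold G in Hrec.
  unfold exp_hyp_step. rewrite Cmult_sub_via_Ci, Csqr_via_Ci.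
  set (N := RtoC (INR (S (S m)))) in *.
  assert (HN1 : N + 1 <> 0) by (unfold N; rewrite <- RtoC_INR_S; apply RtoC_INR_S_neq_0).
  assert (HcN : c + N <> 0) by apply c_plus_INR_neq_0.
  apply (Cmult_eq_reg_l ((N + 1) * (c + N))); [|now apply Cmult_neq_0].
  rewrite Hrec. field. now split.
Qed.

Lemma conv_exp_hyp_coef_unique q (y : nat -> C) :
  y 0%nat = 1 ->
  y 1%nat = a * b / c + Ci * q ->
  y 2%nat = Ci * a * b * q / c + a * (a + 1) * b * (b + 1) / (2 * c * (c + 1)) - q * q / 2 ->
  (forall n, (2 <= n)%nat -> y (S n) = exp_hyp_step q n (y n) (y (n - 1)%nat) (y (n - 2)%nat)) ->
  forall n, y n = conv (exp_coef (Ci * q)) hyp_coef n.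
Proof.
  intros h0 h1 h2 hn.
  apply (eq_of_three_term_rec (exp_hyp_step q)); [ | | | exact hn | ].
  - rewrite h0. unfold conv. cbn [csum Nat.sub].
    rewrite exp_coef_0, hyp_coef_0. ring.
  - rewrite h1. unfold conv. cbn [csum Nat.sub].
    rewrite exp_coef_0, exp_coef_1, hyp_coef_0, hyp_coef_1. ring.
  - rewrite h2. unfold conv. cbn [csum Nat.sub].
    rewrite exp_coef_0, exp_coef_1, exp_coef_2, hyp_coef_0, hyp_coef_1, hyp_coef_2.
    rewrite Csqr_via_Ci. unfold Cdiv. ring.
  - intros n Hn. exact (exp_hyp_coef_step q n Hn).
Qed.

Lemma is_Cseries_exp_hyp w z : (Cmod z < 1)%R ->
  is_Cseries (fun n => conv (exp_coef w) hyp_coef n * Cpow z n)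
             (Cexp (w * z) * hypF a b c z).
Proof.
  intros Hz.
  apply (is_Cseries_ext (conv (exp_coef (w * z)) (hyp_term a b c z))).
  - intros n. unfold conv. rewrite (Cmult_comm (csum _ _)), <- csum_scal.
    apply csum_ext. intros k Hk.
    change (hyp_term a b c z (n - k)) with (hyp_coef (n - k) * Cpow z (n - k)).
    replace (Cpow z n) with (Cpow z k * Cpow z (n - k))
      by (rewrite <- Cpow_add_r; f_equal; lia).
    rewrite exp_coef_mul_pow. ring.
  - apply is_Cseries_conv; auto using is_Cseries_exp_coef, is_Cseries_hypF,
      ex_series_Cmod_exp_coef, ex_series_Cmod_hyp_term.
Qed.

End Hypergeometric.

Theorem theorem3p5 (a b c p : C) (u v : nat -> C)
  (hc : forall n : nat, c <> - RtoC (INR n))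
  (hu0 : u 0%nat = 1)
  (hu1 : u 1%nat = a * b / c + Ci * p)
  (hu2 : u 2%nat = Ci * a * b * p / c
                   + a * (a + 1) * b * (b + 1) / (2 * c * (c + 1)) - p * p / 2)
  (hv0 : v 0%nat = 1)
  (hv1 : v 1%nat = a * b / c - Ci * p)
  (hv2 : v 2%nat = - (Ci * a * b * p / c)
                   + a * (a + 1) * b * (b + 1) / (2 * c * (c + 1)) - p * p / 2)
  (hun : forall n : nat, (2 <= n)%nat ->
     let N := RtoC (INR n) in
     u (S n) = ((a + N) * (b + N) + Ci * p * (c + 2 * N)) / ((N + 1) * (c + N)) * u n
             + p * (p - Ci * (a + b + 2 * N - 1)) / ((N + 1) * (c + N)) * u (n - 1)%nat
             - p * p / ((N + 1) * (c + N)) * u (n - 2)%nat)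
  (hvn : forall n : nat, (2 <= n)%nat ->
     let N := RtoC (INR n) in
     v (S n) = ((a + N) * (b + N) - Ci * p * (c + 2 * N)) / ((N + 1) * (c + N)) * v n
             + p * (p + Ci * (a + b + 2 * N - 1)) / ((N + 1) * (c + N)) * v (n - 1)%nat
             - p * p / ((N + 1) * (c + N)) * v (n - 2)%nat) :
  forall z : C, (Cmod z < 1)%R ->
    is_series (fun n : nat => (u n + v n) / 2 * Cpow z n) (Ccos (p * z) * hypF a b c z).
Proof.
  intros z Hz.
  pose proof (conv_exp_hyp_coef_unique a b c hc p u hu0 hu1 hu2 hun) as Hu.
  assert (Hv : forall n, v n = conv (exp_coef (Ci * - p)) (hyp_coef a b c) n).
  { apply (conv_exp_hyp_coef_unique a b c hc (- p) v hv0).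
    - rewrite hv1. ring.
    - rewrite hv2. unfold Cdiv. ring.
    - intros n Hn. rewrite (hvn n Hn). unfold exp_hyp_step, Cdiv. ring. }
  apply is_Cseries_is_series.
  replace (Ccos (p * z) * hypF a b c z)
    with (/ 2 * (Cexp (Ci * p * z) * hypF a b c z) + / 2 * (Cexp (Ci * - p * z) * hypF a b c z))
    by (unfold Ccos; replace (Ci * - p * z) with (- (Ci * (p * z))) by ring;
        rewrite <- Cmult_assoc; field; apply RtoC_neq_0; lra).
  apply (is_Cseries_ext (fun n => / 2 * (conv (exp_coef (Ci * p)) (hyp_coef a b c) n * Cpow z n)
                      + / 2 * (conv (exp_coef (Ci * - p)) (hyp_coef a b c) n * Cpow z n))).
  - intros n. rewrite Hu, Hv. unfold Cdiv. ring.
  - apply is_Cseries_plus; apply is_Cseries_scal; now apply is_Cseries_exp_hyp.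
Qed.
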